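(* Let $M_n$ be the system $\dot x=Ax+Bu$, $y=Cx$ with $x\in\mathbb{R}^n$, $y\in\mathbb{R}^p$, initial set $X_0(M_n)\subseteq\mathbb{R}^n$ and input set $\mathsf U\subseteq\mathbb{R}^m$, and let $M_k$ be the system $\dot x_r=A_rx_r+B_ru$, $y_r=C_rx_r$ with $x_r\in\mathbb{R}^k$, $y_r\in\mathbb{R}^p$, initial set $X_0(M_k)=\{Tx_0: x_0\in X_0(M_n)\}$ for a linear map $T:\mathbb{R}^n\to\mathbb{R}^k$, and the same input set. Let $\delta=(\delta_1,\dots,\delta_p)$ with $\delta_j>0$ be such that for every $x_0\in X_0(M_n)$, every admissible input $u$ and every $t\ge0$, the output $y$ of $M_n$ from $x(0)=x_0$ and the output $y_r$ of $M_k$ from $x_r(0)=Tx_0$ under the same $u$ satisfy $|y^j(t)-y_r^j(t)|\le\delta_j$ for $1\le j\le p$. Let $a\in\mathbb{R}^p$, $R>0$, $Q\in\mathbb{R}^{p\times p}$ symmetric positive definite, and $S(M_n)=\{y\in\mathbb{R}^p:(y-a)^TQ(y-a)\le R^2\}$. Let $E=[l_1,\dots,l_p]$ be an orthogonal matrix with $E^TQE=\mathrm{diag}(\lambda_1,\dots,\lambda_p)$ (so $\lambda_i>0$ are the eigenvalues of $Q$ with eigenvectors $l_i$), write $l_i=(\gamma_{1i},\dots,\gamma_{pi})^T$, and set \[ \Delta_R=\sqrt{\sum_{i=1}^p\lambda_i\Big(\sum_{j=1}^p|\gamma_{ji}|\delta_j\Big)^2}. \] Assume $\Delta_R\le R$,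 and define $S(M_k)=\{y_r:(y_r-a)^TQ(y_r-a)\le(R-\Delta_R)^2\}$ and $U(M_k)=\{y_r:(y_r-a)^TQ(y_r-a)>(R+\Delta_R)^2\}$. Then for every $t_f\ge0$: (i) if $R_{[0,t_f]}(M_k)\cap(\mathbb{R}^p\setminus S(M_k))=\emptyset$ then $R_{[0,t_f]}(M_n)\cap(\mathbb{R}^p\setminus S(M_n))=\emptyset$ (i.e. $M_n$ is safe); (ii) if $R_{[0,t_f]}(M_k)\cap U(M_k)\ne\emptyset$ then $R_{[0,t_f]}(M_n)\cap(\mathbb{R}^p\setminus S(M_n))\ne\emptyset$ (i.e. $M_n$ is unsafe).
   Context: Admissible inputs are measurable functions $u:[0,\infty)\to\mathbb{R}^m$ with $u(t)\in\mathsf U$ for all $t$. For a system $M$ with initial set $X_0(M)$, the output reach set over $[0,t_f]$ is $R_{[0,t_f]}(M)=\{y(t): t\in[0,t_f],\ y\text{ the output of }M\text{ from some initial state in }X_0(M)\text{ under some admissible input}\}$. $y^j(t)$ denotes the $j$-th component of $y(t)$. *)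

From HB Require Import structures.
From mathcomp Require Import all_boot all_order all_algebra.
From mathcomp Require Import all_classical all_reals all_analysis.
Set Implicit Arguments. Unset Strict Implicit. Unset Printing Implicit Defensive.
Import Order.TTheory GRing.Theory Num.Theory.
Local Open Scope classical_set_scope.
Local Open Scope ring_scope.

Section LinSys.
Variable R : realType.

(* Admissible input: measurable on [0,oo) componentwise, valued in U for all
   t >= 0, and locally integrable (integrable on every [0,t]), so that
   Caratheodory solutions of the linear ODE exist. *)
Definition admissible (m : nat) (U : set 'cV[R]_m) (u : R -> 'cV[R]_m) : Prop :=
  (forall t, 0 <= t -> U (u t)) /\
  (forall i : 'I_m, measurable_fun (`[0%R, +oo[ : set R) (fun t : R => u t i 0)) /\
  (forall i : 'I_m, forall t, 0 <= t ->
      (@lebesgue_measure R).-integrable `[0%R, t] (fun s => (u s i 0)%:E)).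

Definition is_solution (n m : nat) (A : 'M[R]_n) (B : 'M[R]_(n, m))
    (x0 : 'cV[R]_n) (u : R -> 'cV[R]_m) (x : R -> 'cV[R]_n) : Prop :=
  forall t, 0 <= t -> forall i : 'I_n,
    (@lebesgue_measure R).-integrable `[0%R, t]
        (fun s => ((A *m x s + B *m u s) i 0)%:E) /\
    x t i 0 = x0 i 0 + Rintegral (@lebesgue_measure R) `[0%R, t]
                          (fun s => (A *m x s + B *m u s) i 0).

Definition reach_set (n m p : nat) (A : 'M[R]_n) (B : 'M[R]_(n, m))
    (C : 'M[R]_(p, n)) (X0 : set 'cV[R]_n) (U : set 'cV[R]_m) (tf : R)
    : set 'cV[R]_p :=
  [set y | exists x0 u x t, [/\ X0 x0, admissible U u, is_solution A B x0 u x,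
                                0 <= t <= tf & y = C *m x t]].

Definition qform (p : nat) (Q : 'M[R]_p) (a y : 'cV[R]_p) : R :=
  (((y - a)^T *m Q *m (y - a)) 0 0).

End LinSys.

From HB Require Import structures.
From mathcomp Require Import all_boot all_order all_algebra.
From mathcomp Require Import all_classical all_reals all_analysis.
From mathcomp Require Import measurable_realfun.
From mathcomp Require Import ring lra.
Import Order.TTheory GRing.Theory Num.Theory.
Import numFieldNormedType.Exports.
Local Open Scope classical_set_scope.
Local Open Scope ring_scope.
Set Implicit Arguments. Unset Strict Implicit. Unset Printing Implicit Defensive.

(* Every admissible input drives both linear systems along some Caratheodory
   solution: Picard iteration converges, its k-th increment on [0, s] being
   bounded by c (K s)^k / k!.  Hence each output point of one reach set at time t
   has a companion point of the other reach set at the same t, within delta_j in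
   every coordinate.  For the norm |v|_Q = sqrt (v^T Q v) the triangle inequality
   gives |y - a|_Q <= |y_r - a|_Q + |y - y_r|_Q, and diagonalising Q by E bounds
   |e|_Q by Delta_R whenever |e_j| <= delta_j.  So the two values of
   sqrt ((y - a)^T Q (y - a)) differ by at most Delta_R, which yields (i) and (ii). *)

Section IntegralOnSegment.
Variable R : realType.
Local Notation mu := (@lebesgue_measure R).
Implicit Types (f h : R -> R) (s t : R).

Lemma lebesgue_measure_itv0 t : 0 <= t -> mu `[0, t] = t%:E.
Proof.
rewrite le_eqVlt => /predU1P[<-|t0]; first by rewrite set_itv1 lebesgue_measure_set1.
by rewrite lebesgue_measure_itv /= lte_fin t0 sube0.
Qed.

Lemma bounded_integrable_itv0 t h (M : R) : 0 <= t ->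
  measurable_fun `[0, t] h -> (forall s, 0 <= s <= t -> `|h s| <= M) ->
  mu.-integrable `[0, t] (EFin \o h).
Proof.
move=> t0 mh hM; apply: measurable_bounded_integrable => //.
  by rewrite [X in (X < _)%E](_ : _ = t%:E) ?ltry //; exact: lebesgue_measure_itv0.
exists M; split; rewrite ?num_real // => y My s /= /[!in_itv] /= /hM.
by move/le_trans; apply; apply: ltW.
Qed.

Lemma cst_integrable_itv0 t (c : R) : 0 <= t -> mu.-integrable `[0, t] (EFin \o cst c).
Proof. by move=> t0; apply: (bounded_integrable_itv0 (M := `|c|)). Qed.

Lemma normr_Rintegral_itv0_le s t f : s <= t -> mu.-integrable `[0, t] (EFin \o f) ->
  `|\int[mu]_(x in `[0, s]) f x| <= \int[mu]_(x in `[0, t]) `|f x|.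
Proof.
move=> st fi; have sub : `[0, s] `<=` (`[0, t] : set R) by apply: subset_itvl; rewrite bnd_simp.
have nfi := integrable_norm fi.
have nfis : mu.-integrable `[0, s] (EFin \o (Num.norm \o f)) by apply: integrableS nfi.
apply: le_trans (le_normr_Rintegral _ _) _ => //; first exact: integrableS fi.
rewrite fine_le //; [exact: integrable_fin_num nfis|exact: integrable_fin_num nfi|].
apply: ge0_subset_integral => //.
by apply/measurable_EFinP; move/measurable_int/measurable_EFinP: nfi.
Qed.

Lemma primitive_integrable_itv0 t f : 0 <= t -> mu.-integrable `[0, t] (EFin \o f) ->
  mu.-integrable `[0, t] (EFin \o fun s => \int[mu]_(x in `[0, s]) f x).
Proof.
move=> t0 fi; apply: (bounded_integrable_itv0 (M := \int[mu]_(x in `[0, t]) `|f x|)) => //.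
  apply: subspace_continuous_measurable_fun => //.
  exact: parameterized_integral_continuous.
by move=> s /andP[_ st]; exact: normr_Rintegral_itv0_le.
Qed.

Let monomial_continuous k : continuous (fun x : R => k.+1%:R * x ^+ k).
Proof.
have -> : (fun x : R => k.+1%:R * x ^+ k) = horner ('X^k *+ k.+1).
  by apply/funext => x; rewrite hornerMn hornerXn mulr_natl.
exact: continuous_horner.
Qed.

Lemma monomial_integrable_itv0 s k :
  mu.-integrable `[0, s] (EFin \o fun x => k.+1%:R * x ^+ k).
Proof.
apply: continuous_compact_integrable; first exact: segment_compact.
by apply: continuous_subspaceT; exact: monomial_continuous.
Qed.

Lemma Rintegral_monomial_itv0 s k : 0 <= s ->
  \int[mu]_(x in `[0, s]) (k.+1%:R * x ^+ k) = s ^+ k.+1.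
Proof.
rewrite le_eqVlt => /predU1P[<-|s0]; first by rewrite set_itv1 Rintegral_set1 expr0n.
have cX := @continuous_horner R 'X^(k.+1).
have dX : derivable_oo_LRcontinuous (horner 'X^(k.+1)) 0 s.
  split; [by move=> x _; exact: derivable_horner
         |exact/cvg_at_right_filter/cX|exact/cvg_at_left_filter/cX].
have := continuous_FTC2 s0 (continuous_subspaceT (@monomial_continuous k)) dX.
rewrite /Rintegral => -> /=; first by rewrite !hornerXn expr0n /= subr0.
by move=> x _; rewrite -derive.derivE derivXn hornerMn hornerXn mulr_natl.
Qed.

End IntegralOnSegment.
Section SeriesTail.
Variable R : realType.
Implicit Types u v : R^nat.

Definition series_tail v k := limn (series v) - series v k.

Lemma ler_norm_series_tail u v k : cvgn (series u) -> cvgn (series v) ->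
  (forall j, `|u j| <= v j) -> `|series_tail u k| <= series_tail v k.
Proof.
move=> cu cv uv; apply: (@ler_cvg_to _ \oo _ _ (fun m => `|series u m - series u k|)
  (fun m => series v m - series v k)).
- by apply: cvg_norm; apply: cvgB => //; exact: cvg_cst.
- by apply: cvgB => //; exact: cvg_cst.
near=> m; have km : (k <= m)%N by near: m; exists k.
rewrite !sub_series_geq //; apply: le_trans (ler_norm_sum _ _ _) _.
by apply: ler_sum => j _; exact: uv.
Unshelve. all: by end_near.
Qed.

Lemma series_tail_cvg0 v : cvgn (series v) -> series_tail v @ \oo --> 0.
Proof. by move=> cv; rewrite -(subrr (limn (series v))); apply: cvgB => //; exact: cvg_cst. Qed.

Lemma exp_coeff_le (x y : R) k : 0 <= x <= y -> exp_coeff x k <= exp_coeff y k.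
Proof.
move=> /andP[x0 xy]; rewrite /exp_coeff /= ler_wpM2r ?invr_ge0 ?ler0n //.
by rewrite lerXn2r // nnegrE (le_trans x0).
Qed.

End SeriesTail.

Section LocallyIntegrable.
Variable R : realType.
Local Notation mu := (@lebesgue_measure R).

Definition loc_integrable n (h : R -> 'cV[R]_n) :=
  forall t, 0 <= t -> forall i, mu.-integrable `[0, t] (EFin \o fun s => h s i 0).

Lemma loc_integrable_cst n (c : 'cV[R]_n) : loc_integrable (fun=> c).
Proof. by move=> t t0 i; exact: cst_integrable_itv0. Qed.

Lemma loc_integrableD n (h1 h2 : R -> 'cV[R]_n) :
  loc_integrable h1 -> loc_integrable h2 -> loc_integrable (fun s => h1 s + h2 s).
Proof.
move=> h1i h2i t t0 i; apply: eq_integrable (integrableD _ (h1i t t0 i) (h2i t t0 i)) => //.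
by move=> s _; rewrite /= mxE EFinD.
Qed.

Lemma loc_integrableB n (h1 h2 : R -> 'cV[R]_n) :
  loc_integrable h1 -> loc_integrable h2 -> loc_integrable (fun s => h1 s - h2 s).
Proof.
move=> h1i h2i t t0 i; apply: eq_integrable (integrableB _ (h1i t t0 i) (h2i t t0 i)) => //.
by move=> s _; rewrite /= !mxE EFinB.
Qed.

Lemma loc_integrable_mulmx m n (M : 'M[R]_(m, n)) (h : R -> 'cV[R]_n) :
  loc_integrable h -> loc_integrable (fun s => M *m h s).
Proof.
move=> hi t t0 i.
have Mhi j (_ : xpredT j) :
    mu.-integrable `[0, t] (fun s => (M i j)%:E * (h s j 0)%:E)%E.
  by apply: integrableZl => //; exact: hi.
apply: eq_integrable (integrable_sum _ (index_enum 'I_n) Mhi) => // s _.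
by rewrite /= mxE sumEFin.
Qed.

End LocallyIntegrable.

Section MatrixBound.
Variable R : realType.

Lemma mx_entryD m n (M N : 'M[R]_(m, n)) i j : (M + N) i j = M i j + N i j.
Proof. by rewrite mxE. Qed.

Lemma mx_entryB m n (M N : 'M[R]_(m, n)) i j : (M - N) i j = M i j - N i j.
Proof. by rewrite !mxE. Qed.

Definition mx_abs_sum m n (M : 'M[R]_(m, n)) := \sum_i \sum_j `|M i j|.

Lemma mx_abs_sum_ge0 m n (M : 'M[R]_(m, n)) : 0 <= mx_abs_sum M.
Proof. by apply: sumr_ge0 => i _; apply: sumr_ge0. Qed.

Lemma normr_mulmx_le m n (M : 'M[R]_(m, n)) (v : 'cV[R]_n) b :
  (forall j, `|v j 0| <= b) -> forall i, `|(M *m v) i 0| <= mx_abs_sum M * b.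
Proof.
case: n M v => [|n] M v vb i.
  by rewrite mxE big_ord0 normr0 /mx_abs_sum big1 ?mul0r // => i' _; rewrite big_ord0.
have b0 : 0 <= b by apply: le_trans (vb ord0).
rewrite mxE; apply: le_trans (ler_norm_sum _ _ _) _.
apply: (@le_trans _ _ (\sum_j `|M i j| * b)).
  by apply: ler_sum => j _; rewrite normrM ler_wpM2l.
rewrite -mulr_suml ler_wpM2r // /mx_abs_sum (bigD1 i) //= lerDl.
by apply: sumr_ge0 => i' _; apply: sumr_ge0.
Qed.

End MatrixBound.
Section Picard.
Variables (R : realType) (n : nat) (A : 'M[R]_n) (g : R -> 'cV[R]_n) (x0 : 'cV[R]_n).
Hypothesis g_int : loc_integrable g.
Local Notation mu := (@lebesgue_measure R).

Definition picard_map (h : R -> 'cV[R]_n) (t : R) : 'cV[R]_n :=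
  x0 + \col_i \int[mu]_(s in `[0, t]) (A *m h s + g s) i 0.

Definition picard k := iter k picard_map (fun=> x0).

Definition picard_step k t := picard k.+1 t - picard k t.

Let rhs_integrable h : loc_integrable h -> loc_integrable (fun s => A *m h s + g s).
Proof. by move=> hi; apply: loc_integrableD => //; exact: loc_integrable_mulmx. Qed.

Lemma loc_integrable_picard_map h : loc_integrable h -> loc_integrable (picard_map h).
Proof.
move=> hi t t0 i.
have ci := @cst_integrable_itv0 R t (x0 i 0) t0.
have pi := primitive_integrable_itv0 t0 (rhs_integrable hi t0 i).
by apply: eq_integrable (integrableD _ ci pi) => // s _; rewrite /= !mxE EFinD.
Qed.

Lemma picard_mapB h1 h2 t i : 0 <= t -> loc_integrable h1 -> loc_integrable h2 ->
  picard_map h1 t i 0 - picard_map h2 t i 0 =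
  \int[mu]_(s in `[0, t]) (A *m (h1 s - h2 s)) i 0.
Proof.
move=> t0 h1i h2i; rewrite !mxE opprD addrACA subrr add0r.
rewrite -RintegralB //; [|exact: rhs_integrable h1i t t0 i|exact: rhs_integrable h2i t t0 i].
by apply: eq_Rintegral => s _; rewrite mulmxBr !mxE; ring.
Qed.

Lemma loc_integrable_picard k : loc_integrable (picard k).
Proof.
elim: k => [|k ih]; first exact: loc_integrable_cst.
exact: loc_integrable_picard_map.
Qed.

Lemma loc_integrable_picard_step k : loc_integrable (picard_step k).
Proof. exact: loc_integrableB (loc_integrable_picard _) (loc_integrable_picard _). Qed.

Lemma picard_step0 t i : picard_step 0 t i 0 = \int[mu]_(s in `[0, t]) (A *m x0 + g s) i 0.
Proof. by rewrite /picard_step /= !mxE addrC addKr. Qed.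

Lemma picard_stepS k t i : 0 <= t ->
  picard_step k.+1 t i 0 = \int[mu]_(s in `[0, t]) (A *m picard_step k s) i 0.
Proof.
move=> t0; rewrite mx_entryB; apply: picard_mapB => //.
  exact: (loc_integrable_picard k.+1).
exact: (loc_integrable_picard k).
Qed.

Let K := mx_abs_sum A.
Let K_ge0 : 0 <= K. Proof. exact: mx_abs_sum_ge0. Qed.

Definition init_defect T := \sum_i \int[mu]_(s in `[0, T]) `|(A *m x0 + g s) i 0|.

Lemma init_defect_ge0 T : 0 <= init_defect T.
Proof. by apply: sumr_ge0 => i _; apply: Rintegral_ge0. Qed.

Lemma normr_picard_step_le T k s i : 0 <= s <= T ->
  `|picard_step k s i 0| <= init_defect T * exp_coeff (K * s) k.
Proof.
set c0 := init_defect T.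
elim: k s i => [|k ih] s i /andP[s0 sT].
  have T0 : 0 <= T := le_trans s0 sT.
  rewrite /exp_coeff /= expr0 divr1 mulr1 picard_step0.
  apply: le_trans (normr_Rintegral_itv0_le sT (rhs_integrable (loc_integrable_cst x0) T0 i)) _.
  rewrite /c0 /init_defect (bigD1 i) //= lerDl.
  by apply: sumr_ge0 => j _; apply: Rintegral_ge0.
have KexpS x : K * (c0 * exp_coeff (K * x) k) =
    c0 * K ^+ k.+1 / k.+1`!%:R * (k.+1%:R * x ^+ k).
  have kf : k`!%:R != 0 :> R by rewrite pnatr_eq0 -lt0n fact_gt0.
  rewrite /exp_coeff /= factS natrM exprMn exprS; field.
  by rewrite kf /= addrC natr1 pnatr_eq0.
rewrite (picard_stepS k i s0).
have Ai := loc_integrable_mulmx A (loc_integrable_picard_step k) s0 i.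
apply: le_trans (le_normr_Rintegral _ Ai) _ => //.
set c := c0 * K ^+ k.+1 / k.+1`!%:R.
have mi := monomial_integrable_itv0 s k.
apply: (@le_trans _ _ (\int[mu]_(x in `[0, s]) (c * (k.+1%:R * x ^+ k)))).
  apply: le_Rintegral => //; first exact: integrable_norm.
    by apply: eq_integrable (integrableZl _ c mi) => // x _; rewrite /= EFinM.
  move=> x /= /[!in_itv] /= /andP[x0' xs]; rewrite -KexpS.
  by apply: normr_mulmx_le => j; apply: ih; rewrite x0' (le_trans xs).
rewrite RintegralZl // Rintegral_monomial_itv0 // /c /exp_coeff /= exprMn.
by rewrite mulrAC -!mulrA.
Qed.

Definition picard_step_bound T := init_defect T *: exp_coeff (K * T).

Lemma normr_picard_step_le_bound T k s i : 0 <= s <= T ->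
  `|picard_step k s i 0| <= picard_step_bound T k.
Proof.
move=> sT; have /andP[s0 s_le_T] := sT.
apply: le_trans (normr_picard_step_le k i sT) _.
rewrite /picard_step_bound /= ler_wpM2l ?init_defect_ge0 //.
by apply: exp_coeff_le; rewrite mulr_ge0 //= ler_wpM2l.
Qed.

Lemma cvg_series_picard_step_bound T : cvgn (series (picard_step_bound T)).
Proof. exact/is_cvg_seriesZ/is_cvg_series_exp_coeff. Qed.

Lemma cvg_series_picard_step s i : 0 <= s -> cvgn (series (fun k => picard_step k s i 0)).
Proof.
move=> s0; apply/normed_cvg/(series_le_cvg (v_ := picard_step_bound s)).
- by move=> k; exact: normr_ge0.
- by move=> k; rewrite /= mulr_ge0 ?init_defect_ge0 ?exp_coeff_ge0 ?mulr_ge0.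
- by move=> k; apply: normr_picard_step_le_bound; rewrite s0 lexx.
- exact: cvg_series_picard_step_bound.
Qed.

Definition picard_sol t : 'cV[R]_n := x0 + \col_i limn (series (fun k => picard_step k t i 0)).

Lemma picard_telescope k t : picard k t = x0 + \sum_(0 <= j < k) picard_step j t.
Proof.
have telescope : \sum_(0 <= j < k) picard_step j t = picard k t - x0 :=
  telescope_sumr (fun j => picard j t) (leq0n k).
by rewrite telescope addrC subrK.
Qed.

Lemma picard_seriesE k t i :
  picard k t i 0 = x0 i 0 + series (fun j => picard_step j t i 0) k.
Proof. by rewrite {1}picard_telescope mxE summxE. Qed.

Lemma normr_picard_sol_sub_le T k s i : 0 <= s <= T ->
  `|picard_sol s i 0 - picard k s i 0| <= series_tail (picard_step_bound T) k.
Proof.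
move=> /[dup] sT /andP[s0 _]; rewrite picard_seriesE /picard_sol !mxE opprD addrACA subrr add0r.
apply: ler_norm_series_tail; first exact: cvg_series_picard_step.
  exact: cvg_series_picard_step_bound.
by move=> j; exact: normr_picard_step_le_bound.
Qed.

Lemma picard_cvg s i : 0 <= s -> (fun k => picard k s i 0) @ \oo --> picard_sol s i 0.
Proof.
move=> s0; under eq_fun do rewrite picard_seriesE.
by rewrite /picard_sol !mxE; apply: cvgD; [exact: cvg_cst|exact: cvg_series_picard_step].
Qed.

Lemma loc_integrable_picard_sol : loc_integrable picard_sol.
Proof.
move=> T T0 i.
pose M := `|x0 i 0| + series_tail (picard_step_bound T) 0.
apply: (bounded_integrable_itv0 (M := M)) => //.
  apply: (measurable_fun_cvg (h := fun k s => picard k s i 0)).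
    by move=> k; move/measurable_int/measurable_EFinP: (loc_integrable_picard k T0 i).
  by move=> s /= /[!in_itv] /= /andP[s0 _]; exact: picard_cvg.
move=> s sT; rewrite -[picard_sol s i 0](subrK (x0 i 0)) addrC.
by apply: le_trans (ler_normD _ _) _; rewrite lerD2l (normr_picard_sol_sub_le 0).
Qed.

Lemma picard_sol_fixed t : 0 <= t -> picard_map picard_sol t = picard_sol t.
Proof.
move=> t0; apply/matrixP => i j; rewrite ord1 {j}; apply/eqP; rewrite -subr_eq0 -normr_le0.
set e := _ - _; pose tail := series_tail (picard_step_bound t).
have e_le k : `|e| <= K * t * tail k + tail k.+1.
  have -> : e = (picard_map picard_sol t i 0 - picard_map (picard k) t i 0) +
                (picard k.+1 t i 0 - picard_sol t i 0) by rewrite /e addrA subrK.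
  apply: le_trans (ler_normD _ _) _; apply: lerD; last first.
    by rewrite distrC normr_picard_sol_sub_le // t0 lexx.
  have sol_int := loc_integrable_picard_sol.
  rewrite picard_mapB //; last exact: loc_integrable_picard.
  have Ai := loc_integrable_mulmx A (loc_integrableB sol_int (loc_integrable_picard k)) t0 i.
  apply: le_trans (le_normr_Rintegral _ Ai) _ => //.
  apply: (@le_trans _ _ (\int[mu]_(s in `[0, t]) (K * tail k))).
    apply: le_Rintegral => //; [exact: integrable_norm|exact: cst_integrable_itv0|].
    move=> s /= /[!in_itv] /= st; apply: normr_mulmx_le => j.
    by rewrite mx_entryB normr_picard_sol_sub_le.
  rewrite Rintegral_cst // [fine _](_ : _ = t); first by rewrite mulrAC.
  by rewrite -[t in RHS]/(fine t%:E); congr fine; exact: lebesgue_measure_itv0.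
have tail0 := series_tail_cvg0 (cvg_series_picard_step_bound (T := t)).
have tail_cvg : (fun k => K * t * tail k + tail k.+1) @ \oo --> K * t * 0 + 0.
  apply: cvgD; first by apply: cvgM => //; exact: cvg_cst.
  by move: tail0; rewrite -(cvg_shiftS tail).
suff : `|e| <= K * t * 0 + 0 by rewrite mulr0 addr0.
by apply: ler_cvg_to (cvg_cst _) tail_cvg _; exact: nearW.
Qed.

End Picard.

Lemma is_solution_exists (R : realType) n m (A : 'M[R]_n) (B : 'M[R]_(n, m)) x0
    (U : set 'cV[R]_m) u :
  admissible U u -> exists x, is_solution A B x0 u x.
Proof.
case=> _ [_ u_int].
have g_int : loc_integrable (fun s => B *m u s).
  by apply: loc_integrable_mulmx => t t0 i; exact: u_int.
exists (picard_sol A (fun s => B *m u s) x0) => t t0 i; split.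
  have sol_int := loc_integrable_picard_sol A x0 g_int.
  exact: loc_integrableD (loc_integrable_mulmx A sol_int) g_int t t0 i.
by rewrite -{1}(picard_sol_fixed A x0 g_int t0) mx_entryD mxE.
Qed.
Lemma sqrtr_le_sqr (R : realType) (q b : R) : 0 <= b -> (Num.sqrt q <= b) = (q <= b ^+ 2).
Proof. by move=> b0; rewrite -(@ler_sqrt _ q (b ^+ 2)) ?exprn_ge0 // sqrtr_sqr ger0_norm. Qed.

Section QuadraticForm.
Variables (R : realType) (p : nat) (Q : 'M[R]_p).
Hypothesis Qsym : Q^T = Q.
Hypothesis Qpos : forall v : 'cV[R]_p, v != 0 -> 0 < (v^T *m Q *m v) 0 0.
Implicit Types v w : 'cV[R]_p.

Definition qdot v w := (v^T *m Q *m w) 0 0.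

Lemma qdotDl v1 v2 w : qdot (v1 + v2) w = qdot v1 w + qdot v2 w.
Proof. by rewrite /qdot linearD /= !mulmxDl mxE. Qed.

Lemma qdotDr v w1 w2 : qdot v (w1 + w2) = qdot v w1 + qdot v w2.
Proof. by rewrite /qdot mulmxDr mxE. Qed.

Lemma qdotZl r v w : qdot (r *: v) w = r * qdot v w.
Proof. by rewrite /qdot linearZ /= -!scalemxAl mxE. Qed.

Lemma qdotZr r v w : qdot v (r *: w) = r * qdot v w.
Proof. by rewrite /qdot -scalemxAr mxE. Qed.

Lemma qdotC v w : qdot v w = qdot w v.
Proof.
have -> : qdot v w = (v^T *m Q *m w)^T 0 0 by rewrite mxE.
by rewrite !trmx_mul !trmxK Qsym mulmxA.
Qed.

Lemma qdot_ge0 v : 0 <= qdot v v.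
Proof.
have [->|v0] := eqVneq v 0; last exact/ltW/Qpos.
by rewrite /qdot mulmx0 mxE.
Qed.

Lemma qdot_CauchySchwarz v w : qdot v w ^+ 2 <= qdot v v * qdot w w.
Proof.
have [->|w0] := eqVneq w 0; first by rewrite /qdot !mulmx0 mxE expr0n mulr0.
have c0 : 0 < qdot w w := Qpos w0.
(* 0 <= q(c v - b w, c v - b w) = c (a c - b^2), with a, b, c as below. *)
have := qdot_ge0 (qdot w w *: v - qdot v w *: w).
rewrite qdotDl !qdotDr -!scaleNr !qdotZl !qdotZr (qdotC w v).
set a := qdot v v; set b := qdot v w; set c := qdot w w => H.
have : 0 <= c * (a * c - b ^+ 2) by rewrite exprS expr1; nra.
by rewrite pmulr_rge0 // subr_ge0 mulrC.
Qed.

Lemma sqrt_qdot_triangle v w :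
  Num.sqrt (qdot (v + w) (v + w)) <= Num.sqrt (qdot v v) + Num.sqrt (qdot w w).
Proof.
have a0 := qdot_ge0 v; have c0 := qdot_ge0 w.
rewrite -[leRHS]ger0_norm ?addr_ge0 ?sqrtr_ge0 // -sqrtr_sqr ler_wsqrtr //.
rewrite qdotDl !qdotDr (qdotC w v) sqrrD !sqr_sqrtr //.
have : qdot v w <= Num.sqrt (qdot v v) * Num.sqrt (qdot w w).
  rewrite -sqrtrM //; apply: le_trans (ler_norm _) _.
  by rewrite -sqrtr_sqr ler_wsqrtr // qdot_CauchySchwarz.
lra.
Qed.

Variables (E : 'M[R]_p) (lam : 'I_p -> R).
Hypothesis EtE : E^T *m E = 1%:M.
Hypothesis EQE : E^T *m Q *m E = diag_mx (\row_i lam i).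

Lemma qdot_diag v : qdot v v = \sum_i lam i * ((E^T *m v) i 0) ^+ 2.
Proof.
have EEt : E *m E^T = 1%:M by apply: mulmx1C.
have -> : qdot v v = ((E^T *m v)^T *m (E^T *m Q *m E) *m (E^T *m v)) 0 0.
  rewrite trmx_mul trmxK.
  have -> : v^T *m E *m (E^T *m Q *m E) *m (E^T *m v) =
            v^T *m (E *m E^T) *m Q *m (E *m E^T) *m v by rewrite !mulmxA.
  by rewrite EEt !mulmx1.
rewrite EQE mul_mx_diag mxE; apply: eq_bigr => i _.
by rewrite !mxE; ring.
Qed.

Lemma eigenvalue_ge0 i : 0 <= lam i.
Proof.
have := qdot_ge0 (E *m delta_mx i 0); rewrite qdot_diag mulmxA EtE mul1mx.
rewrite (bigD1 i) //= big1 ?addr0; first by rewrite mxE !eqxx expr1n mulr1.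
by move=> j ji; rewrite mxE (negbTE ji) expr0n mulr0.
Qed.

Lemma qdot_le_of_box (delta : 'I_p -> R) v : (forall j, `|v j 0| <= delta j) ->
  qdot v v <= \sum_(i < p) lam i * (\sum_(j < p) `|E j i| * delta j) ^+ 2.
Proof.
move=> vd; rewrite qdot_diag; apply: ler_sum => i _.
apply: ler_wpM2l; first exact: eigenvalue_ge0.
have delta_ge0 j : 0 <= delta j := le_trans (normr_ge0 _) (vd j).
rewrite -[X in X <= _]real_normK ?num_real // lerXn2r ?nnegrE ?normr_ge0 //.
  by apply: sumr_ge0 => j _; apply: mulr_ge0.
rewrite mxE; apply: le_trans (ler_norm_sum _ _ _) _.
by apply: ler_sum => j _; rewrite mxE normrM ler_wpM2l.
Qed.

Lemma sqrt_qform_le (delta : 'I_p -> R) (a y z : 'cV[R]_p) :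
  (forall j, `|y j 0 - z j 0| <= delta j) ->
  Num.sqrt (qform Q a y) <=
  Num.sqrt (qform Q a z) + Num.sqrt (\sum_(i < p) lam i * (\sum_(j < p) `|E j i| * delta j) ^+ 2).
Proof.
move=> yz; rewrite /qform -/(qdot _ _) -/(qdot _ _) -(subrK z y) -addrA addrC.
apply: le_trans (sqrt_qdot_triangle _ _) _; rewrite lerD2l ler_wsqrtr //.
by apply: qdot_le_of_box => j; rewrite !mxE.
Qed.

End QuadraticForm.
Section Companion.
Variables (R : realType) (n k m p : nat).
Variables (A : 'M[R]_n) (B : 'M[R]_(n, m)) (C : 'M[R]_(p, n)).
Variables (Ar : 'M[R]_k) (Br : 'M[R]_(k, m)) (Cr : 'M[R]_(p, k)).
Variables (T : 'M[R]_(k, n)) (X0 : set 'cV[R]_n) (U : set 'cV[R]_m) (delta : 'I_p -> R).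
Hypothesis output_close : forall x0 u x xr t, X0 x0 -> admissible U u ->
  is_solution A B x0 u x -> is_solution Ar Br (T *m x0) u xr -> 0 <= t ->
  forall j, `|(C *m x t) j 0 - (Cr *m xr t) j 0| <= delta j.

Lemma reduced_companion tf y : reach_set A B C X0 U tf y ->
  exists2 yr, reach_set Ar Br Cr [set T *m x0 | x0 in X0] U tf yr &
              forall j, `|y j 0 - yr j 0| <= delta j.
Proof.
move=> [x0 [u [x [t [X0x0 adm sol /andP[t0 ttf] ->]]]]].
have [xr solr] := is_solution_exists Ar Br (T *m x0) adm.
exists (Cr *m xr t); first by exists (T *m x0), u, xr, t; split => //; [by exists x0|by rewrite t0].
exact: output_close X0x0 adm sol solr t0.
Qed.

Lemma full_companion tf yr : reach_set Ar Br Cr [set T *m x0 | x0 in X0] U tf yr ->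
  exists2 y, reach_set A B C X0 U tf y & forall j, `|y j 0 - yr j 0| <= delta j.
Proof.
move=> [_ [u [xr [t [[x0 X0x0 <-] adm solr /andP[t0 ttf] ->]]]]].
have [x sol] := is_solution_exists A B x0 adm.
exists (C *m x t); first by exists x0, u, x, t; split => //; rewrite t0.
exact: output_close X0x0 adm sol solr t0.
Qed.

End Companion.

Theorem lemma3 (R : realType) (n k m p : nat)
  (A : 'M[R]_n) (B : 'M[R]_(n, m)) (C : 'M[R]_(p, n))
  (Ar : 'M[R]_k) (Br : 'M[R]_(k, m)) (Cr : 'M[R]_(p, k))
  (T : 'M[R]_(k, n)) (X0 : set 'cV[R]_n) (U : set 'cV[R]_m)
  (delta : 'I_p -> R)
  (a : 'cV[R]_p) (Rad : R) (Q : 'M[R]_p) (E : 'M[R]_p) (lam : 'I_p -> R) :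
  (forall j, 0 < delta j) ->
  (forall x0 u x xr t, X0 x0 -> admissible U u ->
     is_solution A B x0 u x -> is_solution Ar Br (T *m x0) u xr -> 0 <= t ->
     forall j : 'I_p, `|(C *m x t) j 0 - (Cr *m xr t) j 0| <= delta j) ->
  0 < Rad ->
  Q^T = Q ->
  (forall v : 'cV[R]_p, v != 0 -> 0 < (v^T *m Q *m v) 0 0) ->
  E^T *m E = 1%:M ->
  E^T *m Q *m E = diag_mx (\row_i lam i) ->
  let DeltaR := Num.sqrt (\sum_(i < p) lam i * (\sum_(j < p) `|E j i| * delta j) ^+ 2) in
  DeltaR <= Rad ->
  let SMn := [set y | qform Q a y <= Rad ^+ 2] in
  let SMk := [set y | qform Q a y <= (Rad - DeltaR) ^+ 2] in
  let UMk := [set y | qform Q a y > (Rad + DeltaR) ^+ 2] in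
  forall tf : R, 0 <= tf ->
    (reach_set Ar Br Cr [set T *m x0 | x0 in X0] U tf `&` ~` SMk = set0 ->
       reach_set A B C X0 U tf `&` ~` SMn = set0) /\
    (reach_set Ar Br Cr [set T *m x0 | x0 in X0] U tf `&` UMk !=set0 ->
       reach_set A B C X0 U tf `&` ~` SMn !=set0).
Proof.
move=> _ close Rad_gt0 Qsym Qpos EtE EQE DeltaR DeltaR_le SMn SMk UMk tf _.
have DeltaR_ge0 : 0 <= DeltaR := sqrtr_ge0 _.
have qform_close (y z : 'cV[R]_p) : (forall j, `|y j 0 - z j 0| <= delta j) ->
    Num.sqrt (qform Q a y) <= Num.sqrt (qform Q a z) + DeltaR.
  by move=> yz; exact: (sqrt_qform_le Qsym Qpos EtE EQE a yz).
split.
- move=> reduced_safe; apply/seteqP; split => // y [ry notSy]; apply: notSy.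
  have [yr ryr yyr] := reduced_companion close ry.
  have Syr : SMk yr by apply: contrapT => nSyr; rewrite -[False]/(set0 yr) -reduced_safe.
  rewrite /SMn /= -sqrtr_le_sqr ?(ltW Rad_gt0) //; apply: le_trans (qform_close _ _ yyr) _.
  by rewrite -lerBrDr sqrtr_le_sqr ?subr_ge0.
- move=> [yr [ryr Uyr]]; have [y ry yyr] := full_companion close ryr.
  exists y; split => // Sy; move: Uyr; rewrite /UMk /= ltNge => /negP; apply.
  rewrite -sqrtr_le_sqr ?addr_ge0 ?(ltW Rad_gt0) //.
  apply: le_trans (qform_close yr y _) _; first by move=> j; rewrite distrC.
  by rewrite lerD2r sqrtr_le_sqr ?(ltW Rad_gt0).
Qed.
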